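(* Let $b>1$, let $(p,R,I)$ be proper with $I$ non-empty, and let $k$ be the greatest divisor of $p$ coprime with $b$. Then the $0$-circuits of the minimisation of $\mathcal{C}_{R,p,I}$ have a total of $k+1$ states.
   Context: $A_b=\{0,\ldots,b-1\}$. Given $p\ge1$, $R\subseteq\{0,\ldots,p-1\}$, finite $I\subseteq\mathbb{N}$, let $S=(R+p\mathbb{N})\oplus I$ ($\oplus$ = symmetric difference). $(p,R,I)$ is proper if $p$ is the smallest positive integer for which $S=(R'+p\mathbb{N})\oplus I'$ for some $R'\subseteq\{0,\ldots,p-1\}$ and finite $I'$. $\mathcal{A}_{R,p}$: states $\{0,\ldots,p-1\}$, initial $0$, final $R$, transitions $n\xrightarrow{a}(nb+a)\bmod p$. With $m=\max I$, $\mathcal{B}_I$: states $\{0,\ldots,m\}\cup\{\bot\}$, initial $0$, final $I$, transitions $i\xrightarrow{a}ib+a$ if $ib+a\le m$, else $i\xrightarrow{a}\bot$, and $\bot\xrightarrow{a}\bot$. $\mathcal{C}_{R,p,I}$ is the accessible part of the product of $\mathcal{A}_{R,p}$ and $\mathcal{B}_I$ (initial state $(0,0)$, componentwise transitions), with $(s,t)$ final iff exactly one of $s\in R$, $t\in I$ holds. The minimisation is the complete deterministic automaton with fewest states accepting the same language. A $0$-circuit is a circuit all of whose transitions are labelled $0$. *)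

From mathcomp Require Import all_boot.
Set Implicit Arguments. Unset Strict Implicit. Unset Printing Implicit Defensive.

(* Finite sets of naturals are represented by sequences (duplicates harmless). *)

Definition in_RpN (p : nat) (R : seq nat) (n : nat) : Prop :=
  exists r j, r \in R /\ n = r + p * j.

Definition inS (p : nat) (R I : seq nat) (n : nat) : Prop :=
  (in_RpN p R n /\ n \notin I) \/ (~ in_RpN p R n /\ n \in I).

Definition proper_triple (p : nat) (R I : seq nat) : Prop :=
  0 < p /\ all (fun r => r < p) R /\
  forall p', 0 < p' ->
    (exists R' I' : seq nat, all (fun r => r < p') R' /\
        forall n, inS p R I n <-> inS p' R' I' n) ->
    p <= p'.

Record dfa (b : nat) := Dfa {
  dstate : finType;
  dinit : dstate;
  ddelta : dstate -> 'I_b -> dstate;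
  dfinal : pred dstate }.

Definition drun b (M : dfa b) (w : seq 'I_b) : dstate M :=
  foldl (@ddelta b M) (@dinit b M) w.

Definition daccepts b (M : dfa b) (w : seq 'I_b) : bool := @dfinal b M (drun M w).

(* The product automaton C_{R,p,I}: states (s,t) with s in {0..p-1} (A_{R,p})
   and t in {0..m} u {bot} (B_I, bot encoded as None).  We only use it through
   its language, which is the same as the language of its accessible part. *)
Definition stepA (b p : nat) (s : nat) (a : nat) : nat := (s * b + a) %% p.

Definition stepB (b m : nat) (t : option nat) (a : nat) : option nat :=
  match t with
  | Some i => if i * b + a <= m then Some (i * b + a) else None
  | None => None
  end.

Definition stepC (b p m : nat) (st : nat * option nat) (a : 'I_b)
  : nat * option nat :=
  (stepA b p st.1 a, stepB b m st.2 a).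

Definition finalC (R I : seq nat) (st : nat * option nat) : bool :=
  (st.1 \in R) (+) (match st.2 with Some t => t \in I | None => false end).

Definition langC (b p : nat) (R I : seq nat) (w : seq 'I_b) : bool :=
  finalC R I (foldl (@stepC b p (\max_(i <- I) i)) (0, Some 0) w).

Definition is_minimisation b (L : seq 'I_b -> bool) (M : dfa b) : Prop :=
  (forall w, daccepts M w = L w) /\
  (forall M' : dfa b, (forall w, daccepts M' w = L w) ->
     #|@dstate b M| <= #|@dstate b M'|).

Definition on_zero_circuit b (M : dfa b) (q : dstate M) : Prop :=
  exists (z : 'I_b) (n : nat), nat_of_ord z = 0 /\ 0 < n /\
    iter n (fun x => @ddelta b M x z) q = q.

(* A minimal automaton is accessible and has no two indistinguishable states,
   so its states are the residual languages of the words.  Reading a word in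
   base b gives a number x, and the word is accepted iff x lies in
   S = (R + pN) (+) I.  Write p = g k where g is the pi(b)-part of p.  Beyond
   max I only x mod p matters, and appending phi(k) zeros (multiplying by
   b^phi(k)) fixes x mod p when g | x; conversely a long run of zeros makes the
   value divisible by g, as g | b^p.  So the states on 0-circuits are the state
   of the empty word and those of the values t g + (max I + 1) p, t < k.  These
   k + 1 states are distinct: two of the latter coincide only if
   [x mod p \in R] has a period smaller than p, which properness forbids, and
   the state of the empty word still distinguishes the elements of I. *)

From mathcomp Require Import all_boot cyclic zify boolp.
Set Implicit Arguments. Unset Strict Implicit. Unset Printing Implicit Defensive.

Lemma card_sig_total (T : finType) (P : pred T) :
  #|T| <= #|{: {x | P x}}| -> forall x, P x.
Proof.
rewrite card_sig => leTP x.
have /subset_cardP/(_ (subset_predT _)) PT : #|[pred x | P x]| = #|T|.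
  by apply/eqP; rewrite eqn_leq max_card.
by have := PT x; rewrite !inE.
Qed.

Lemma drun_nseq b (M : dfa b) w n a :
  drun M (w ++ nseq n a) = iter n (fun q => ddelta q a) (drun M w).
Proof.
rewrite /drun foldl_cat; elim: n (foldl _ _ w) => //= n IH q.
by rewrite IH -iterSr.
Qed.

Section AutomatonReduction.
Variables (b : nat) (M : dfa b).
Implicit Types (q : dstate M) (w v : seq 'I_b).

Definition run_from q w : dstate M := foldl (@ddelta b M) q w.

Definition reachable q : bool := `[< exists w, drun M w = q >].

Lemma reachable_drun w : reachable (drun M w).
Proof. by apply/asboolP; exists w. Qed.

Lemma reachable_delta q a : reachable q -> reachable (ddelta q a).
Proof.
move=> /asboolP[w <-]; apply/asboolP; exists (rcons w a).
by rewrite /drun foldl_rcons.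
Qed.

Definition accessible_part : dfa b :=
  @Dfa b {q | reachable q} (exist _ (dinit M) (reachable_drun [::]))
    (fun x a => exist _ (ddelta (val x) a) (reachable_delta a (valP x)))
    (fun x => dfinal (val x)).

Lemma drun_accessible_part w : val (drun accessible_part w) = drun M w.
Proof.
rewrite /drun -[dinit M]/(val (dinit accessible_part)).
by elim: w (dinit accessible_part) => //= a w IH x; rewrite IH.
Qed.

Definition indist q q' : Prop :=
  forall v, dfinal (run_from q v) = dfinal (run_from q' v).

Lemma indist_sym q q' : indist q q' -> indist q' q.
Proof. by move=> eqqq' v; rewrite eqqq'. Qed.

Lemma indist_delta q q' a : indist q q' -> indist (ddelta q a) (ddelta q' a).
Proof. by move=> eqqq' v; apply: (eqqq' (a :: v)). Qed.

Lemma indist_ex q : exists q', `[< indist q q' >].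
Proof. by exists q; apply/asboolP. Qed.

(* [xchoose] depends only on the predicate, so indistinguishable states get
   the same representative. *)
Definition canon q : dstate M := xchoose (indist_ex q).

Lemma canon_indist q : indist q (canon q).
Proof. exact/asboolP/(xchooseP (indist_ex q)). Qed.

Lemma canon_eq q q' : indist q q' -> canon q = canon q'.
Proof.
move=> eqqq'; apply: eq_xchoose => x.
by apply/asboolP/asboolP => eqx v; rewrite -eqx ?eqqq'.
Qed.

Lemma canon_canonical q : canon (canon q) == canon q.
Proof. by apply/eqP/canon_eq/indist_sym/canon_indist. Qed.

Definition reduced : dfa b :=
  @Dfa b {q | canon q == q}
    (exist (fun x => canon x == x) _ (canon_canonical (dinit M)))
    (fun x a =>
       exist (fun x => canon x == x) _ (canon_canonical (ddelta (val x) a)))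
    (fun x => dfinal (val x)).

Lemma drun_reduced w : val (drun reduced w) = canon (drun M w).
Proof.
rewrite /drun; have : val (dinit reduced) = canon (dinit M) by [].
elim: w (dinit reduced) (dinit M) => //= a w IH x q eqxq; apply: IH.
by rewrite /= eqxq; apply/canon_eq/indist_delta/indist_sym/canon_indist.
Qed.

End AutomatonReduction.

Section Minimisation.
Variables (b : nat) (L : seq 'I_b -> bool) (M : dfa b).
Hypothesis M_min : is_minimisation L M.

Lemma minimisation_reachable (q : dstate M) : exists w, drun M w = q.
Proof.
have acc_L w : daccepts (accessible_part M) w = L w.
  by rewrite -M_min.1 /daccepts /= drun_accessible_part.
exact/asboolP/(card_sig_total (M_min.2 _ acc_L)).
Qed.

Lemma minimisation_indist (q q' : dstate M) : indist q q' -> q = q'.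
Proof.
have red_L w : daccepts (reduced M) w = L w.
  by rewrite -M_min.1 /daccepts /= drun_reduced -(canon_indist _ [::]).
have canonK := card_sig_total (M_min.2 _ red_L).
by move=> /canon_eq; rewrite (eqP (canonK q)) (eqP (canonK q')).
Qed.

Lemma minimisation_drun_eq w w' :
  (forall v, L (w ++ v) = L (w' ++ v)) -> drun M w = drun M w'.
Proof.
move=> eqL; apply: minimisation_indist => v.
by have := eqL v; rewrite -!M_min.1 /daccepts /drun !foldl_cat.
Qed.

End Minimisation.

Section WordValue.
Variable b : nat.
Implicit Types w v : seq 'I_b.

Definition wval w : nat := foldl (fun x (a : 'I_b) => x * b + a) 0 w.

Lemma wval_rcons w a : wval (rcons w a) = wval w * b + a.
Proof. by rewrite /wval foldl_rcons. Qed.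

Lemma wval_cat w v : wval (w ++ v) = wval w * b ^ size v + wval v.
Proof.
elim/last_ind: v => [|v a IH]; first by rewrite cats0 muln1 addn0.
by rewrite -rcons_cat !wval_rcons IH size_rcons expnSr; lia.
Qed.

Lemma wval_nseq0 n (z : 'I_b) : z = 0 :> nat -> wval (nseq n z) = 0.
Proof.
move=> z0; elim: n => // n IH.
by rewrite /= -cat1s wval_cat IH /wval /= z0.
Qed.

Variable b_gt0 : 0 < b.

Fixpoint digits (l y : nat) : seq 'I_b :=
  if l is l'.+1 then rcons (digits l' (y %/ b)) (Ordinal (ltn_pmod y b_gt0))
  else [::].

Lemma size_digits l y : size (digits l y) = l.
Proof. by elim: l y => //= l IH y; rewrite size_rcons IH. Qed.

Lemma wval_digits l y : y < b ^ l -> wval (digits l y) = y.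
Proof.
elim: l y => [|l IH] y /=; first by rewrite expn0 ltnS leqn0 => /eqP->.
move=> y_lt; rewrite wval_rcons IH /= -?divn_eq // ltn_divLR //.
by rewrite -expnSr.
Qed.

End WordValue.

Definition memS (p : nat) (R I : seq nat) (x : nat) : bool :=
  (x %% p \in R) (+) (x \in I).

Lemma foldl_stepC b p m (w : seq 'I_b) :
  foldl (@stepC b p m) (0, Some 0) w =
  (wval w %% p, if wval w <= m then Some (wval w) else None).
Proof.
elim/last_ind: w => [|w a IH]; first by rewrite /= mod0n.
rewrite foldl_rcons IH wval_rcons /stepC /stepA /=; congr pair.
  by rewrite -modnDml modnMml modnDml.
case: ifP => //= big_w; case: ifP => // small_wa; exfalso.
have b_gt0 : 0 < b := leq_ltn_trans (leq0n a) (ltn_ord a).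
by move: big_w small_wa; nia.
Qed.

Lemma langC_wval b p R I (w : seq 'I_b) :
  langC p R I w = memS p R I (wval w).
Proof.
rewrite /langC foldl_stepC /finalC /memS /=.
case: leqP => // big_w; case I_w: (wval w \in I) => //.
by have := @leq_bigmax_seq _ I xpredT id _ I_w isT; rewrite leqNgt big_w.
Qed.

Lemma in_RpN_mod p R n : 0 < p -> all (fun r => r < p) R ->
  in_RpN p R n <-> n %% p \in R.
Proof.
move=> p_gt0 /allP R_lt; split=> [[r [j [R_r ->]]]|R_n].
  by rewrite addnC mulnC modnMDl modn_small ?R_lt.
by exists (n %% p), (n %/ p); rewrite addnC mulnC -divn_eq.
Qed.

Lemma inS_memS p R I n : 0 < p -> all (fun r => r < p) R ->
  inS p R I n <-> memS p R I n.
Proof.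
move=> p_gt0 R_lt; rewrite /inS /memS (in_RpN_mod n p_gt0 R_lt).
by case: (n %% p \in R); case: (n \in I); intuition.
Qed.

Definition periodic (P : pred nat) (d : nat) : Prop :=
  forall y, P (y + d) = P y.

Lemma periodic_mul P d j : periodic P d -> periodic P (j * d).
Proof.
move=> P_per; elim: j => [|j IH] y; first by rewrite mul0n addn0.
by rewrite mulSn addnA IH P_per.
Qed.

Lemma periodic_mod P d y : periodic P d -> P y = P (y %% d).
Proof. by move=> P_per; rewrite {1}(divn_eq y d) addnC periodic_mul. Qed.

Lemma periodic_gcd P p d : 0 < p ->
  periodic P p -> periodic P d -> periodic P (gcdn p d).
Proof.
move=> p_gt0 P_per_p P_per_d y; have [a _ /dvdnP[c gcd_eq]] := Bezoutl d p_gt0.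
by rewrite -(periodic_mul a P_per_d) -addnA gcd_eq periodic_mul.
Qed.

Lemma proper_no_period p R I d : proper_triple p R I -> 0 < d < p ->
  ~ periodic (fun y => y %% p \in R) d.
Proof.
move=> [p_gt0 [R_lt p_min]] /andP[d_gt0 d_lt_p] P_per.
pose P y := y %% p \in R; pose e := gcdn p d.
have P_per_e : periodic P e.
  by apply: periodic_gcd P_per => // y; rewrite /P modnDr.
have e_gt0 : 0 < e by rewrite gcdn_gt0 p_gt0.
have e_lt_p : e < p by apply: leq_ltn_trans d_lt_p; rewrite dvdn_leq ?dvdn_gcdr.
pose R' := filter P (iota 0 e).
have R'_lt : all (fun r => r < e) R'.
  by apply/allP => r; rewrite mem_filter mem_iota => /and3P[].
suff : p <= e by rewrite leqNgt e_lt_p.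
apply: (p_min e e_gt0); exists R', I; split=> // n.
rewrite !inS_memS // /memS mem_filter mem_iota ltn_pmod //.
by rewrite -(periodic_mod _ P_per_e) leq0n !andbT.
Qed.

Lemma translate_mod p R I x y : proper_triple p R I ->
  (forall z, (x + z) %% p \in R = ((y + z) %% p \in R)) -> x = y %[mod p].
Proof.
move=> pRI_proper; have p_gt0 : 0 < p := pRI_proper.1.
wlog le_xy : x y / x %% p <= y %% p.
  move=> wlog_xy xy_P; case: (leqP (x %% p) (y %% p)) => [le_xy | /ltnW le_yx].
    exact: wlog_xy.
  by apply/esym/wlog_xy => // z; rewrite xy_P.
move=> xy_P; apply/eqP; rewrite eqn_leq le_xy leqNgt; apply/negP => lt_xy.
have x_lt := ltn_pmod x p_gt0; have y_lt := ltn_pmod y p_gt0.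
apply: (proper_no_period pRI_proper (d := y %% p - x %% p)); first by lia.
move=> w; have := xy_P (w + p - x %% p).
have -> : x + (w + p - x %% p) = x %/ p * p + (w + p).
  by rewrite {1}(divn_eq x p); lia.
have -> : y + (w + p - x %% p) = y %/ p * p + (w + (y %% p - x %% p) + p).
  by rewrite {1}(divn_eq y p); lia.
by rewrite !modnMDl !modnDr => ->.
Qed.

Lemma part_pi_dvd_exp m n : 0 < n -> n`_\pi(m) %| m ^ n.
Proof.
move=> n_gt0; have part_gt0 := part_gt0 \pi(m) n.
apply/(dvdn_partP _ part_gt0) => q q_pi; rewrite p_part.
have : q \in \pi(m) := pnatPpi (part_pnat _ _) q_pi.
rewrite mem_primes => /and3P[_ _ q_dvd_m].
apply: dvdn_trans (dvdn_exp2r _ q_dvd_m) (dvdn_exp2l _ _).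
apply: ltnW (leq_trans (ltn_logl _ part_gt0) _).
by rewrite dvdn_leq ?dvdn_part.
Qed.

Lemma max_coprime_divisor b p k : 0 < b -> 0 < p ->
  k %| p -> coprime k b -> (forall d, d %| p -> coprime d b -> d <= k) ->
  k = p`_\pi(b)^'.
Proof.
move=> b_gt0 p_gt0 k_dvd_p k_cop k_max.
have k_gt0 : 0 < k by apply: dvdn_gt0 k_dvd_p.
have k_nat : \pi(b)^'.-nat k by rewrite -coprime_pi' // coprime_sym.
have k_dvd_part : k %| p`_\pi(b)^'.
  by rewrite -(part_pnat_id k_nat) partn_dvd.
apply/eqP; rewrite eqn_leq dvdn_leq ?part_gt0 //= k_max ?dvdn_part //.
by rewrite coprime_sym coprime_pi' ?part_gt0 ?part_pnat.
Qed.

Lemma mod_mul_exp_totient b g k x l : coprime b k ->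
  totient k %| l -> g %| x -> x * b ^ l = x %[mod g * k].
Proof.
move=> b_cop /dvdnP[j ->] /dvdnP[t ->].
have exp_eq1 : b ^ (j * totient k) = 1 %[mod k].
  by rewrite mulnC expnM -modnXm Euler_exp_totient // modnXm exp1n.
rewrite (mulnC t g) -mulnA -!muln_modr; congr (g * _).
by rewrite -modnMmr exp_eq1 modnMmr muln1.
Qed.

Section ZeroCircuits.
Variables (b p : nat) (R I : seq nat) (k : nat) (M : dfa b).
Hypotheses (b_gt1 : 1 < b) (pRI_proper : proper_triple p R I).
Hypotheses (I_neq0 : I != [::]) (k_dvd_p : k %| p) (k_coprime : coprime k b).
Hypothesis k_max : forall d, d %| p -> coprime d b -> d <= k.
Hypothesis M_min : is_minimisation (@langC b p R I) M.

Let b_gt0 : 0 < b := ltnW b_gt1.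
Let p_gt0 : 0 < p := pRI_proper.1.
Local Notation m := (\max_(i <- I) i).
Local Notation g := p`_\pi(b).
Local Notation S := (memS p R I).
Local Notation P x := (x %% p \in R).

Definition state x : dstate M := drun M (digits b_gt0 x x).

(* Values beyond max I that are congruent to t g modulo p. *)
Definition rep t := t * g + m.+1 * p.

Lemma p_eq : p = g * k.
Proof. by rewrite (max_coprime_divisor b_gt0 p_gt0 k_dvd_p) // partnC. Qed.

Lemma k_gt0 : 0 < k.
Proof. exact: dvdn_gt0 k_dvd_p. Qed.

Lemma g_gt0 : 0 < g.
Proof. exact: part_gt0. Qed.

Lemma g_dvd_exp l : p <= l -> g %| b ^ l.
Proof.
by move=> le_pl; rewrite (dvdn_trans (part_pi_dvd_exp _ p_gt0)) ?dvdn_exp2l.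
Qed.

Lemma memS_big x : m < x -> S x = P x.
Proof.
move=> big_x; rewrite /memS; case I_x: (x \in I); last by rewrite addbF.
by have := @leq_bigmax_seq _ I xpredT id _ I_x isT; rewrite leqNgt big_x.
Qed.

Lemma big_mul_exp x l z : m < x -> m < x * b ^ l + z.
Proof.
move=> big_x; apply: leq_trans big_x (leq_trans (leq_pmulr _ _) (leq_addr _ _)).
by rewrite expn_gt0 b_gt0.
Qed.

Lemma big_shift u : m < u + m.+1 * p.
Proof. exact: leq_trans (leq_pmulr _ p_gt0) (leq_addl _ _). Qed.

Lemma mul_exp_mod x l : g %| x -> totient k %| l -> x * b ^ l = x %[mod p].
Proof.
move=> g_x k_l; have b_coprime : coprime b k by rewrite coprime_sym.
by have := mod_mul_exp_totient b_coprime k_l g_x; rewrite -p_eq.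
Qed.

Lemma P_mul_exp x l z : g %| x -> totient k %| l -> P (x * b ^ l + z) = P (x + z).
Proof. by move=> g_x k_l; rewrite -modnDml mul_exp_mod // modnDml. Qed.

Lemma wval_digits_self x : wval (digits b_gt0 x x) = x.
Proof. exact/wval_digits/ltn_expl. Qed.

Lemma drun_state w : drun M w = state (wval w).
Proof.
rewrite /state; apply: (minimisation_drun_eq M_min) => v.
by rewrite !langC_wval !wval_cat wval_digits_self.
Qed.

Lemma state_mod x y : m < x -> m < y -> x = y %[mod p] -> state x = state y.
Proof.
move=> big_x big_y xy_mod; rewrite /state.
apply: (minimisation_drun_eq M_min) => v.
rewrite !langC_wval !wval_cat !wval_digits_self !memS_big ?big_mul_exp //.
by rewrite -modnDml -modnMml xy_mod modnMml modnDml.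
Qed.

Lemma iter_zero_state x n (z : 'I_b) : z = 0 :> nat ->
  iter n (fun q => ddelta q z) (state x) = state (x * b ^ n).
Proof.
move=> z0; rewrite -drun_nseq drun_state wval_cat wval_nseq0 // addn0.
by rewrite size_nseq wval_digits_self.
Qed.

Lemma state_eq_memS x y : state x = state y ->
  forall l z, z < b ^ l -> S (x * b ^ l + z) = S (y * b ^ l + z).
Proof.
move=> xy_eq l z z_lt.
have accepts_word u :
    daccepts M (digits b_gt0 u u ++ digits b_gt0 l z) = S (u * b ^ l + z).
  rewrite M_min.1 langC_wval wval_cat wval_digits_self.
  by rewrite wval_digits // size_digits.
rewrite -!accepts_word /daccepts /drun !foldl_cat.
by rewrite -!/(drun _ _) -!/(state _) xy_eq.
Qed.

Lemma exp_totient_gt z : z < b ^ (totient k * z.+1).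
Proof.
apply: leq_trans (ltnW (ltn_expl _ b_gt1)) _.
by rewrite leq_exp2l // leq_pmull // totient_gt0 k_gt0.
Qed.

Lemma state_eq_P x y : m < x -> m < y -> g %| x -> g %| y ->
  state x = state y -> forall z, P (x + z) = P (y + z).
Proof.
move=> big_x big_y g_x g_y xy_eq z.
have := state_eq_memS xy_eq (exp_totient_gt z).
by rewrite !memS_big ?big_mul_exp // !P_mul_exp ?dvdn_mulr.
Qed.

Lemma state_big_inj x y : m < x -> m < y -> g %| x -> g %| y ->
  state x = state y -> x = y %[mod p].
Proof.
move=> big_x big_y g_x g_y xy_eq; apply: (translate_mod pRI_proper).
exact: state_eq_P xy_eq.
Qed.

Lemma state0_neq_big x : m < x -> g %| x -> state 0 != state x.
Proof.
move=> big_x g_x; apply/eqP => x_eq.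
have S_eq z : S z = P (x + z).
  have := state_eq_memS x_eq (exp_totient_gt z); rewrite mul0n add0n => ->.
  by rewrite memS_big ?big_mul_exp // P_mul_exp ?dvdn_mulr.
have P_shift u : P (u + m.+1 * p) = P u by rewrite addnC modnMDl.
have [i I_i] : exists i, i \in I.
  by case: I I_neq0 => // i s _; exists i; rewrite mem_head.
have := S_eq (i + m.+1 * p); rewrite memS_big ?big_shift //.
have := S_eq i; rewrite /memS I_i addbT addnA !P_shift => <-.
by case: (P i).
Qed.

Lemma on_zero_circuit_state0 : on_zero_circuit (state 0).
Proof.
exists (Ordinal b_gt0), 1; do !split => //.
by rewrite (@iter_zero_state 0 1 (Ordinal b_gt0)).
Qed.

Lemma on_zero_circuit_big x : m < x -> g %| x -> on_zero_circuit (state x).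
Proof.
move=> big_x g_x; exists (Ordinal b_gt0), (totient k).
do !split => //; first by rewrite totient_gt0 k_gt0.
rewrite iter_zero_state //; apply: state_mod; rewrite ?mul_exp_mod //.
by have := big_mul_exp (totient k) 0 big_x; rewrite addn0.
Qed.

Lemma on_zero_circuit_inv q : on_zero_circuit q ->
  exists x, q = state x /\ (x = 0 \/ m < x /\ g %| x).
Proof.
move=> [z [n [z0 [n_gt0 cycle]]]].
have [w w_q] := minimisation_reachable M_min q.
rewrite -w_q drun_state in cycle *; set x := wval w in cycle *.
have [->|x_gt0] := posnP x; first by exists 0; split; [|left].
pose N := (p + m) * n.
have cycleN : iter N (fun q => ddelta q z) (state x) = state x.
  by rewrite iterM iter_fix.
rewrite iter_zero_state // in cycleN.
have le_pmN : p + m <= N by rewrite /N leq_pmulr.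
exists (x * b ^ N); split=> //; right; split.
  apply: leq_trans (leq_pmull _ x_gt0); apply: leq_trans (ltn_expl N b_gt1).
  exact: leq_trans (leq_addl p m) le_pmN.
exact/dvdn_mull/g_dvd_exp/(leq_trans (leq_addr m p)).
Qed.

Lemma rep_big t : m < rep t.
Proof. exact: big_shift. Qed.

Lemma g_dvd_rep t : g %| rep t.
Proof. by rewrite dvdn_add ?dvdn_mull ?dvdn_mulr ?dvdn_part. Qed.

Lemma rep_mod t : t < k -> rep t %% p = t * g.
Proof.
move=> t_lt; rewrite /rep addnC modnMDl modn_small //.
suff : t * g < g * k by rewrite -p_eq.
by rewrite mulnC ltn_pmul2l ?g_gt0.
Qed.

Lemma state_rep x : m < x -> g %| x -> exists2 t, t < k & state x = state (rep t).
Proof.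
move=> big_x g_x; have g_xp : g %| x %% p by rewrite /dvdn modn_dvdm ?dvdn_part.
have t_lt : x %% p %/ g < k by rewrite ltn_divLR ?g_gt0 // mulnC -p_eq ltn_pmod.
exists (x %% p %/ g) => //.
by apply: state_mod; rewrite ?rep_big // rep_mod // divnK.
Qed.

Definition zero_circuit_states : {set dstate M} :=
  state 0 |: [set state (rep t) | t : 'I_k].

Lemma zero_circuit_statesP q : q \in zero_circuit_states <-> on_zero_circuit q.
Proof.
rewrite in_setU1; split=> [/orP[/eqP-> | /imsetP[t _ ->]] | ].
- exact: on_zero_circuit_state0.
- exact: on_zero_circuit_big (rep_big t) (g_dvd_rep t).
move=> /on_zero_circuit_inv[x [-> [-> | [big_x g_x]]]]; first by rewrite eqxx.
have [t t_lt ->] := state_rep big_x g_x.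
by apply/orP; right; apply/imsetP; exists (Ordinal t_lt).
Qed.

Lemma card_zero_circuit_states : #|zero_circuit_states| = k.+1.
Proof.
rewrite cardsU1 card_imset ?card_ord.
  suff -> : state 0 \notin [set state (rep t) | t : 'I_k] by [].
  apply/negP => /imsetP[t _ /eqP].
  by rewrite (negbTE (state0_neq_big (rep_big t) (g_dvd_rep t))).
move=> t1 t2 /(state_big_inj (rep_big _) (rep_big _) (g_dvd_rep _) (g_dvd_rep _)).
rewrite !rep_mod ?ltn_ord // => /eqP; rewrite eqn_pmul2r ?g_gt0 // => /eqP.
exact: val_inj.
Qed.

End ZeroCircuits.

Theorem proposition41 (b p : nat) (R I : seq nat) (k : nat) :
  1 < b ->
  proper_triple p R I ->
  I != [::] ->
  k %| p -> coprime k b ->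
  (forall d, d %| p -> coprime d b -> d <= k) ->
  forall M : dfa b, is_minimisation (@langC b p R I) M ->
  exists X : {set dstate M},
    (forall q, q \in X <-> on_zero_circuit q) /\ #|X| = k.+1.
Proof.
move=> b_gt1 pRI_proper I_neq0 k_dvd_p k_coprime k_max M M_min.
exists (zero_circuit_states p I k M b_gt1); split.
- exact: zero_circuit_statesP b_gt1 pRI_proper k_dvd_p k_coprime k_max M_min.
- exact: card_zero_circuit_states b_gt1 pRI_proper I_neq0 k_dvd_p k_coprime
    k_max M_min.
Qed.
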